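(* Let $v_1,\dots,v_{d+1}$ be the vertices of a $d$-simplex in general position. Let $1\le i\le d$, let $(\Gamma,\Delta)$ be a partition of $[d]=\{1,\dots,d\}$ with $|\Gamma|=i$, let $\delta=(\delta(1),\dots,\delta(d-i))$ be a fixed ordering of $\Delta$ and $\gamma=(\gamma(1),\dots,\gamma(i))$ a fixed ordering of $\Gamma$. Let $\tilde{\mathfrak S}_{d,\delta}$ be the set of permutations of $[d]$ whose one-line notation is $(\gamma'(1),\dots,\gamma'(i),\delta(1),\dots,\delta(d-i))$ for some ordering $\gamma'$ of $\Gamma$, and let $(\gamma,\delta)$ denote the permutation $(\gamma(1),\dots,\gamma(i),\delta(1),\dots,\delta(d-i))$. Then $$\sum_{\sigma\in\tilde{\mathfrak S}_{d,\delta}}\operatorname{sign}(\sigma)\prod_{j=1}^i\hat z(\sigma,j)=(-1)^{i(i-1)/2}\operatorname{sign}((\gamma,\delta))\det\hat X((\gamma,\delta),i).$$ In particular, $\sum_{\sigma\in\mathfrak S_d}\operatorname{sign}(\sigma)\prod_{j=1}^d\hat z(\sigma,j)=(-1)^{d(d-1)/2}\det\hat X(\mathbf 1,d)$.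
   Context: Write $v_i=(x_{i,1},\dots,x_{i,d})$ and $\hat x_{r,c}=x_{r,c}-x_{d+1,c}$. $\pi^{(j)}$ forgets the last $j$ coordinates; general position means that for every $0\le k\le d-1$ and every $(k+1)$-subset $U$ of the vertices, $\pi^{(d-k)}(\mathrm{conv}(U))$ is a $k$-simplex. For $\sigma\in\mathfrak S_d$, $1\le k\le d$: $\hat X(\sigma,k)$ is the $k\times k$ matrix with entries $\hat x_{\sigma(r),c}$ ($1\le r,c\le k$); $\hat Y(\sigma,k)$ is the $k\times k$ matrix with rows $(1,\hat x_{\sigma(r),1},\dots,\hat x_{\sigma(r),k-1})$; $\hat z(\sigma,k)=\det\hat X(\sigma,k)/\det\hat Y(\sigma,k)$. $\mathbf 1$ is the identity permutation; $\operatorname{sign}(\sigma)$ is the sign of the permutation. *)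

From mathcomp Require Import all_boot all_order all_algebra all_fingroup.
Set Implicit Arguments. Unset Strict Implicit. Unset Printing Implicit Defensive.
Import GRing.Theory Num.Theory.
Local Open Scope ring_scope.

Section SimplexDefs.
Variable R : realFieldType.

Definition aff_indep (I : finType) (n : nat) (U : {set I}) (p : I -> 'rV[R]_n) :=
  forall a : I -> R, \sum_(j in U) a j = 0 -> \sum_(j in U) a j *: p j = 0 ->
    forall j, j \in U -> a j = 0.

(* Vertices v_1..v_{d+1} are the rows of V : 'M_(d+1, d); vertex d+1 is ord_max. *)
Definition vertex (d : nat) (V : 'M[R]_(d.+1, d)) (j : 'I_d.+1) : 'rV[R]_d := row j V.

Definition simplex_vertices (d : nat) (V : 'M[R]_(d.+1, d)) :=
  aff_indep [set: 'I_d.+1] (vertex V).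

Definition proj_first (d k : nat) (hk : (k <= d)%N) (x : 'rV[R]_d) : 'rV[R]_k :=
  \row_(c < k) x 0 (widen_ord hk c).

(* General position: for every 0 <= k <= d-1 and every (k+1)-subset U of the
   vertices, the projections to the first k coordinates of the points of U are
   affinely independent, i.e. pi^{(d-k)}(conv U) is a k-simplex. *)
Definition general_position (d : nat) (V : 'M[R]_(d.+1, d)) :=
  forall (k : 'I_d) (U : {set 'I_d.+1}), #|U| = k.+1 ->
    aff_indep U (fun j => proj_first (ltnW (ltn_ord k)) (vertex V j)).

Definition ord_le (d : nat) (k : 'I_d.+1) : (k <= d)%N := ltn_ord k.
Definition wid (d : nat) (k : 'I_d.+1) : 'I_k -> 'I_d := widen_ord (ord_le k).

(* \hat x_{r,c} = x_{r,c} - x_{d+1,c}, for r, c in [d] (0-based here). *)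
Definition xhat (d : nat) (V : 'M[R]_(d.+1, d)) (r c : 'I_d) : R :=
  V (widen_ord (leqnSn d) r) c - V ord_max c.

(* nat-indexed column access (out-of-range values are never used below). *)
Definition xhatn (d : nat) (V : 'M[R]_(d.+1, d)) (r : 'I_d) (c : nat) : R :=
  if insub c is Some c' then xhat V r c' else 0.

Definition Xhat (d : nat) (V : 'M[R]_(d.+1, d)) (s : 'S_d) (k : 'I_d.+1) : 'M[R]_k :=
  \matrix_(r < k, c < k) xhat V (s (wid r)) (wid c).

(* \hat Y(sigma,k): k x k matrix with rows
   (1, \hat x_{sigma(r),1}, ..., \hat x_{sigma(r),k-1}) *)
Definition Yhat (d : nat) (V : 'M[R]_(d.+1, d)) (s : 'S_d) (k : 'I_d.+1) : 'M[R]_k :=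
  \matrix_(r < k, c < k) (if (c == 0 :> nat) then 1 else xhatn V (s (wid r)) c.-1).

Definition zhat (d : nat) (V : 'M[R]_(d.+1, d)) (s : 'S_d) (k : 'I_d.+1) : R :=
  \det (Xhat V s k) / \det (Yhat V s k).

End SimplexDefs.

From mathcomp Require Import all_boot all_order all_algebra all_fingroup.
From mathcomp Require Import ring zify.
Set Implicit Arguments. Unset Strict Implicit. Unset Printing Implicit Defensive.
Import GRing.Theory Num.Theory.
Local Open Scope ring_scope.

(* Write Z_k(t) for the sum, over the permutations s agreeing with t at the
   positions after k, of sign(s) * zhat(s,1) * ... * zhat(s,k); we show by
   induction on k that Z_k(t) = (-1)^C(k,2) sign(t) det Xhat(t,k).
   The factor zhat(s,k+1) only depends on the set s({1..k+1}): both Xhat and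
   Yhat change by the same row permutation.  It therefore factors out, and the
   remaining sum splits according to the position m <= k+1 at which t puts
   s(k+1), into the sums Z_k(t_m) for the transposed permutations
   t_m = t o (m k+1).  By induction these are signed determinants which differ
   from det Xhat(t,k) in one row, and their alternating sum is exactly the
   expansion of det Yhat(t,k+1) along its last row.  This cancels the
   denominator of zhat(t,k+1); general position makes that denominator
   nonzero. *)

Section FirstColumnOnes.
Variable R : comPzRingType.
Implicit Types f : nat -> nat -> R.

Definition sqmx f n : 'M[R]_n := \matrix_(r < n, c < n) f r c.

Definition col1mx f n : 'M[R]_n :=
  \matrix_(r < n, c < n) (if c == 0%N :> nat then 1 else f r c.-1).

Lemma det_sqmx_replace_row k f (m : 'I_k) :
  \det (sqmx (fun r => f (if r == m :> nat then k else r)) k)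
  = \sum_(c < k) f k c * cofactor (sqmx f k) m c.
Proof.
rewrite (expand_det_row _ m); apply: eq_bigr => c _; rewrite !mxE eqxx.
congr (_ * _); rewrite /cofactor; congr (_ * \det _).
by apply/matrixP => a b; rewrite !mxE val_eqE eq_sym (negbTE (neq_lift _ _)).
Qed.

Lemma det_col1mx k f :
  \det (col1mx f k.+1) = (-1) ^+ k * (\det (sqmx f k)
    - \sum_(m < k) \det (sqmx (fun r => f (if r == m :> nat then k else r)) k)).
Proof.
under [X in _ - X]eq_bigr => m _ do rewrite det_sqmx_replace_row.
set Y := col1mx f k.+1; set X := sqmx f k.
rewrite (expand_det_row _ ord_max) big_ord_recl.
have minor0 : row' ord_max (col' ord0 Y) = X.
  by apply/matrixP => r c; rewrite !mxE lift0 lift_max.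
have cofactorS (c : 'I_k) : cofactor Y ord_max (lift ord0 c)
     = - (-1) ^+ k * \sum_(m < k) cofactor X m c.
  (* The minor has the column of ones of [Y]; expand along it. *)
  have k0 : (0 < k)%N by apply: leq_ltn_trans (ltn_ord c).
  rewrite /cofactor (expand_det_col _ (Ordinal k0)) !mulr_sumr.
  apply: eq_bigr => r _; rewrite /cofactor.
  have -> : row' r (col' (Ordinal k0) (row' ord_max (col' (lift ord0 c) Y)))
       = row' r (col' c X).
    by apply/matrixP => a b; rewrite !mxE lift_max /= /bump /= !ltnS addnS.
  rewrite !mxE lift_max /= mul1r !exprD !expr0 /=; ring.
under [X in _ + X = _]eq_bigr => c _ do rewrite cofactorS !mxE /=.
rewrite [cofactor Y _ _]/cofactor minor0 !mxE /= exchange_big /= mulrBr addn0 mul1r.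
congr (_ + _); rewrite -mulrN -sumrN mulr_sumr; apply: eq_bigr => c _.
rewrite -mulr_sumr; ring.
Qed.
End FirstColumnOnes.

Section SimplexSums.
Variables (R : realFieldType) (d : nat) (V : 'M[R]_(d.+1, d)).

(* Rows and columns are indexed by [nat] so that the matrices of all sizes
   share one entry function; the junk value 0 is never read. *)
Definition xhat_perm (s : 'S_d) (r c : nat) : R :=
  if insub r is Some r' then xhatn V (s r') c else 0.

Definition zhatn (s : 'S_d) (n : nat) : R :=
  \det (sqmx (xhat_perm s) n) / \det (col1mx (xhat_perm s) n).

Lemma insub_widen n (hn : (n <= d)%N) (r : 'I_n) :
  insub (r : nat) = Some (widen_ord hn r) :> option 'I_d.
Proof. exact: (valK (widen_ord hn r)). Qed.

Lemma Xhat_sqmx s (j : 'I_d.+1) : Xhat V s j = sqmx (xhat_perm s) j.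
Proof.
apply/matrixP => r c; rewrite !mxE /xhat_perm /xhatn.
by rewrite !(insub_widen (ord_le j)).
Qed.

Lemma Yhat_col1mx s (j : 'I_d.+1) : Yhat V s j = col1mx (xhat_perm s) j.
Proof. by apply/matrixP => r c; rewrite !mxE /xhat_perm (insub_widen (ord_le j)). Qed.

Lemma zhat_zhatn s (j : 'I_d.+1) : zhat V s j = zhatn s j.
Proof. by rewrite /zhat /zhatn Xhat_sqmx Yhat_col1mx. Qed.

Definition agree_from k (s t : 'S_d) :=
  [forall r : 'I_d, (k <= r)%N ==> (s r == t r)].

Definition zsum k (t : 'S_d) : R :=
  \sum_(s | agree_from k s t) (-1) ^+ s * \prod_(j < d.+1 | (0 < j <= k)%N) zhatn s j.

Lemma agree_from_invp_lt k s t (x : 'I_d) :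
  agree_from k s t -> (x < k)%N -> ((t^-1)%g (s x) < k)%N.
Proof.
move=> /forallP agr_st ltxk; rewrite ltnNge; apply/negP => le_k.
have /eqP := implyP (agr_st (t^-1 (s x))%g) le_k; rewrite permKV => /perm_inj eq_x.
by move: le_k; rewrite eq_x leqNgt ltxk.
Qed.

Lemma zhatn_agree_from k s t :
  (k <= d)%N -> agree_from k s t -> zhatn s k = zhatn t k.
Proof.
move=> hk agr_st.
pose f (r : 'I_k) : 'I_k :=
  Ordinal (agree_from_invp_lt (x := widen_ord hk r) agr_st (ltn_ord r)).
have f_inj : injective f.
  move=> a b /(congr1 val) /= /val_inj /perm_inj /perm_inj /(congr1 val) /= ab.
  exact: val_inj.
pose rho := perm f_inj.
have t_rho r : t (widen_ord hk (rho r)) = s (widen_ord hk r).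
  rewrite permE; have -> : widen_ord hk (f r) = (t^-1 (s (widen_ord hk r)))%g.
    exact: val_inj.
  by rewrite permKV.
have X_rho : sqmx (xhat_perm s) k = row_perm rho (sqmx (xhat_perm t) k).
  by apply/matrixP => r c; rewrite !mxE /xhat_perm !(insub_widen hk) t_rho.
have Y_rho : col1mx (xhat_perm s) k = row_perm rho (col1mx (xhat_perm t) k).
  by apply/matrixP => r c; rewrite !mxE /xhat_perm !(insub_widen hk) t_rho.
rewrite /zhatn X_rho Y_rho !row_permE !det_mulmx det_perm invfM mulrACA.
by rewrite divff ?mul1r // signr_eq0.
Qed.

Lemma sum_agree_fromS k (hk : (k < d)%N) t (F : 'S_d -> R) :
  \sum_(s | agree_from k.+1 s t) F s =
  \sum_(m : 'I_d | (m <= k)%N)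
     \sum_(s | agree_from k s (tperm m (Ordinal hk) * t)%g) F s.
Proof.
set kk := Ordinal hk.
rewrite (partition_big (fun s : 'S_d => (t^-1)%g (s kk)) (fun m : 'I_d => (m <= k)%N));
  last by move=> s agr_st; apply: agree_from_invp_lt agr_st _.
apply: eq_bigr => m le_mk; apply: eq_bigl => s; apply/idP/idP.
  case/andP => /forallP agr_st /eqP s_kk; apply/forallP => r; apply/implyP => le_kr.
  rewrite permM; case: (ltngtP k r) le_kr => // [lt_kr _ | eq_kr _].
    rewrite tpermD; first exact: (implyP (agr_st r) lt_kr).
      by rewrite -val_eqE /= neq_ltn (leq_ltn_trans le_mk lt_kr).
    by rewrite -val_eqE /= neq_ltn lt_kr.
  have -> : r = kk by apply/val_inj.
  by rewrite tpermR -s_kk permKV.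
move=> /forallP agr_st; apply/andP; split.
  apply/forallP => r; apply/implyP => lt_kr.
  have := implyP (agr_st r) (ltnW lt_kr); rewrite permM tpermD //.
    by rewrite -val_eqE /= neq_ltn (leq_ltn_trans le_mk lt_kr).
  by rewrite -val_eqE /= neq_ltn lt_kr.
have := implyP (agr_st kk) (leqnn k); rewrite permM tpermR => /eqP ->.
by rewrite permK.
Qed.

Lemma sign_sqr n : (-1) ^+ n * (-1) ^+ n = 1 :> R.
Proof. by rewrite -exprD addnn -mul2n exprM sqrrN !expr1n. Qed.

Lemma sum_tperm_det k (hk : (k < d)%N) t :
  \sum_(m : 'I_d | (m <= k)%N) (-1) ^+ (tperm m (Ordinal hk) * t)%g
       * \det (sqmx (xhat_perm (tperm m (Ordinal hk) * t)%g) k)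
  = (-1) ^+ t * (-1) ^+ k * \det (col1mx (xhat_perm t) k.+1).
Proof.
set kk := Ordinal hk.
rewrite (bigD1 kk) //= tperm1 mul1g det_col1mx.
rewrite (eq_bigl (fun m : 'I_d => (m < k)%N)); last first.
  by move=> m /=; rewrite ltn_neqAle -val_eqE /= andbC.
rewrite (big_ord_narrow (ltnW hk)).
have swapped (m : 'I_k) : let tm := (tperm (widen_ord (ltnW hk) m) kk * t)%g in
  (-1) ^+ tm * \det (sqmx (xhat_perm tm) k)
  = - ((-1) ^+ t * \det (sqmx (fun r => xhat_perm t (if r == m :> nat then k else r)) k)).
  have m_kk : widen_ord (ltnW hk) m != kk by rewrite -val_eqE /= neq_ltn ltn_ord.
  rewrite /= odd_permM odd_tperm m_kk signrN mulNr; congr (- (_ * \det _)).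
  apply/matrixP => r c; rewrite !mxE /xhat_perm (insub_widen (ltnW hk)) permM.
  have [eq_rm | ne_rm] := eqVneq (r : nat) m.
    have -> : widen_ord (ltnW hk) r = widen_ord (ltnW hk) m by exact: val_inj.
    by rewrite tpermL (insub_widen (leqnn d) kk); congr (xhatn V (t _) c); exact: val_inj.
  rewrite tpermD ?(insub_widen (ltnW hk)) //.
    by rewrite -val_eqE /= eq_sym.
  by rewrite -val_eqE /= neq_ltn ltn_ord orbT.
under eq_bigr => m _ do rewrite swapped.
by rewrite [RHS]mulrA -[_ * _ * (-1) ^+ k]mulrA sign_sqr mulr1 sumrN -mulr_sumr mulrBr.
Qed.

Lemma det_col1mx_neq0 (hgp : general_position V) t j :
  (0 < j)%N -> (j <= d)%N -> \det (col1mx (xhat_perm t) j) != 0.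
Proof.
(* A kernel vector of Yhat(t,j) is an affine dependence between the vertices
   t(1), ..., t(j) projected to their first j-1 coordinates. *)
move=> j_gt0 hj; apply/negP => /det0P [v v_neq0 vY0].
have kd : (j.-1 < d)%N by rewrite prednK.
pose k : 'I_d := Ordinal kd.
pose g (r : 'I_j) : 'I_d.+1 := widen_ord (leqnSn d) (t (widen_ord hj r)).
have g_inj : injective g.
  move=> a b /(congr1 val) /= /val_inj /perm_inj /(congr1 val) /=.
  exact: val_inj.
pose U := [set g r | r in [set: 'I_j]].
have cardU : #|U| = k.+1 by rewrite card_imset // cardsT card_ord /= prednK.
pose a (x : 'I_d.+1) := \sum_(r | g r == x) v ord0 r.
have a_g r : a (g r) = v ord0 r.
  by rewrite /a (eq_bigl (pred1 r)) ?big_pred1_eq // => r'; rewrite /= (inj_eq g_inj).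
have vY0_col (c : 'I_j) : \sum_r v ord0 r * col1mx (xhat_perm t) j r c = 0.
  by have := congr1 (fun M : 'M[R]_(1, j) => M ord0 c) vY0; rewrite /= !mxE.
have sum_v : \sum_r v ord0 r = 0.
  by rewrite -[RHS](vY0_col (Ordinal j_gt0)); apply: eq_bigr => r _; rewrite mxE mulr1.
have a_U0 : \sum_(x in U) a x = 0.
  rewrite big_imset /=; last by move=> x y _ _; apply: g_inj.
  by rewrite -[RHS]sum_v; apply: eq_big => [r|r _]; rewrite ?in_setT ?a_g.
have a_Uproj0 : \sum_(x in U) a x *: proj_first (ltnW (ltn_ord k)) (vertex V x) = 0.
  rewrite big_imset /=; last by move=> x y _ _; apply: g_inj.
  apply/rowP => b; rewrite summxE mxE.
  have hb : (b.+1 < j)%N by move: (ltn_ord b); rewrite /= -ltnS prednK.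
  rewrite -[RHS](vY0_col (Ordinal hb)) (eq_bigl (fun _ => true)) => [|r]; last first.
    by rewrite in_setT.
  under [RHS]eq_bigr do rewrite mxE /= /xhat_perm (insub_widen hj) /xhatn
    (insub_widen (ltnW (ltn_ord k))) /xhat mulrBr.
  rewrite sumrB -mulr_suml sum_v mul0r subr0.
  by apply: eq_bigr => r _; rewrite a_g !mxE; congr (_ * V _ _); exact/val_inj.
have a0 := hgp k U cardU a a_U0 a_Uproj0.
apply/negP: v_neq0; rewrite negbK; apply/eqP/rowP => r; rewrite mxE -a_g.
by apply: a0; apply: imset_f; rewrite in_setT.
Qed.

Lemma prod_zhatnS k s : (k < d)%N ->
  \prod_(j < d.+1 | (0 < j <= k.+1)%N) zhatn s j
  = (\prod_(j < d.+1 | (0 < j <= k)%N) zhatn s j) * zhatn s k.+1.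
Proof.
move=> hk; rewrite (bigD1 (inord k.+1)) /=; last by rewrite inordK ?ltnS ?leqnn.
rewrite inordK ?ltnS // mulrC.
by congr (_ * _); apply: eq_bigl => j; rewrite -val_eqE /= inordK ?ltnS //; lia.
Qed.

Lemma zsum_eq (hgp : general_position V) k : (k <= d)%N -> forall t,
  zsum k t = (-1) ^+ 'C(k, 2) * (-1) ^+ t * \det (sqmx (xhat_perm t) k).
Proof.
elim: k => [_ t | k IH hk t].
  rewrite /zsum (eq_bigl (pred1 t)) => [|s]; last first.
    apply/forallP/eqP => [agr_st|->]; last by move=> r; apply/implyP.
    by apply/permP => r; apply/eqP/(implyP (agr_st r)).
  by rewrite big_pred1_eq big_pred0 => [|[[]]] //; rewrite det_mx00 !mulr1 mul1r.
rewrite /zsum.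
under eq_bigr => s agr_st do
  rewrite prod_zhatnS // (zhatn_agree_from hk agr_st) mulrA.
rewrite -mulr_suml (sum_agree_fromS hk).
under eq_bigr => m _ do rewrite -/(zsum k _) (IH (ltnW hk)) -mulrA.
rewrite -mulr_sumr sum_tperm_det binS bin1 exprD /zhatn.
have := det_col1mx_neq0 hgp t (ltn0Sn k) hk.
set Y := \det (col1mx _ _) => Y_neq0; set X := \det (sqmx _ _).
by rewrite -!mulrA [Y * _]mulrCA divff // mulr1 [(-1) ^+ k * _]mulrCA.
Qed.

End SimplexSums.

Unset Implicit Arguments.

Theorem mainTheorem17 (R : realFieldType) (d : nat) (V : 'M[R]_(d.+1, d))
  (hsimp : simplex_vertices V) (hgp : general_position V)
  (i : nat) (hi1 : (1 <= i)%N) (hid : (i <= d)%N)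
  (Gamma : {set 'I_d}) (hG : #|Gamma| = i)
  (tau : 'S_d) (htau : forall r : 'I_d, (tau r \in Gamma) = (r < i)%N) :
  (\sum_(s : 'S_d | [forall r : 'I_d, (i <= r)%N ==> (s r == tau r)])
      (-1) ^+ s * \prod_(j < d.+1 | (0 < j <= i)%N) zhat V s j
   = (-1) ^+ ((i * (i - 1)) %/ 2)%N * (-1) ^+ tau * \det (Xhat V tau (inord i)))
  /\
  (\sum_(s : 'S_d) (-1) ^+ s * \prod_(j < d.+1 | (0 < j)%N) zhat V s j
   = (-1) ^+ ((d * (d - 1)) %/ 2)%N * \det (Xhat V 1 ord_max)).
Proof.
have binom2 n : ((n * (n - 1)) %/ 2 = 'C(n, 2))%N by rewrite bin2 subn1 divn2.
split.
  rewrite Xhat_sqmx inordK ?ltnS // binom2 -(zsum_eq hgp hid tau).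
  by apply: eq_bigr => s _; congr (_ * _); apply: eq_bigr => j _; rewrite zhat_zhatn.
have := zsum_eq hgp (leqnn d) 1%g; rewrite odd_perm1 mulr1 Xhat_sqmx binom2 => <-.
apply: eq_big => [s | s _]; first by apply/esym/forallP => r; rewrite leqNgt ltn_ord.
apply: congr1; apply: eq_big => [j | j _]; last exact: zhat_zhatn.
by have := ltn_ord j; rewrite ltnS => ->; rewrite andbT.
Qed.
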